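(* Let $k\ge1$ be odd, $\omega=\frac{-1+\sqrt{-3}}{2}$, and with $S,T,T_\omega=\begin{psmallmatrix}1&\omega\\0&1\end{psmallmatrix},L=\begin{psmallmatrix}\omega^2&0\\0&\omega\end{psmallmatrix},U=TS,E=T_\omega SL$ let $W_{k,k}=\ker(\mathbf{1}+S)\cap\ker(\mathbf{1}-L)\cap\ker(\mathbf{1}+U+U^2)\cap\ker(\mathbf{1}+E+E^2)$. Let $\zeta=e^{\pi i/3}$ and $\varepsilon_3=\begin{psmallmatrix}\zeta&0\\0&1\end{psmallmatrix}$, so $P|\varepsilon_3=P(\zeta z,\bar\zeta\bar z)$. Then $W_{k,k}|\varepsilon_3=W_{k,k}$, and hence $$W_{k,k}=\bigoplus_{j=1}^{6}W_{k,k}^{\zeta^j},\qquad W_{k,k}^{\zeta^j}=W_{k,k}\cap\{P\in V_{k,k}:P(\zeta z,\bar\zeta\bar z)=\zeta^jP(z,\bar z)\}.$$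
   Context: $S=\begin{psmallmatrix}0&-1\\1&0\end{psmallmatrix}$, $T=\begin{psmallmatrix}1&1\\0&1\end{psmallmatrix}$. $V_{k,k}$: polynomials $\sum_{0\le i,j\le k}c_{ij}z^i\bar z^j$ over $\mathbb{C}$ with right action $(P|\gamma)(z,\bar z)=(cz+e)^k\overline{(cz+e)}^kP\!\left(\frac{az+b}{cz+e},\frac{\bar a\bar z+\bar b}{\bar c\bar z+\bar e}\right)$ for $\gamma=\begin{psmallmatrix}a&b\\c&e\end{psmallmatrix}$, extended linearly; $\ker(X)=\{P:P|X=0\}$; $W|\varepsilon_3=\{P|\varepsilon_3:P\in W\}$. *)

From HB Require Import structures.
From mathcomp Require Import all_boot all_order all_algebra all_field.
Set Implicit Arguments. Unset Strict Implicit. Unset Printing Implicit Defensive.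
Import Order.TTheory GRing.Theory Num.Theory.
Local Open Scope ring_scope.

(* An element P = sum_{0<=i,j<=k} c_ij z^i zbar^j of V_{k,k} is represented
   by its coefficient matrix c : 'M[algC]_(k.+1), c i j = c_ij. *)

Definition V (k : nat) := 'M[algC]_(k.+1).

Definition mx2 (a b c d : algC) : 'M[algC]_2 :=
  \matrix_(i < 2, j < 2)
    if i == 0 :> nat then (if j == 0 :> nat then a else b)
    else (if j == 0 :> nat then c else d).

Definition mobpart (k i : nat) (a b c e : algC) : {poly algC} :=
  ('X * a%:P + b%:P) ^+ i * ('X * c%:P + e%:P) ^+ (k - i).

(* (P|g)(z,zbar) = (cz+e)^k conj(cz+e)^k P((az+b)/(cz+e), conj((az+b)/(cz+e))),
   i.e. with z and zbar as independent variables,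
   sum_{i,j} c_ij (az+b)^i (cz+e)^(k-i) conj(a) zb + conj(b))^j (conj(c) zb + conj(e))^(k-j). *)
Definition act (k : nat) (g : 'M[algC]_2) (P : V k) : V k :=
  let a := g 0 0 in let b := g 0 1 in let c := g 1 0 in let e := g 1 1 in
  \matrix_(i' < k.+1, j' < k.+1)
    \sum_(i < k.+1) \sum_(j < k.+1)
      P i j * (mobpart k i a b c e)`_i' * (mobpart k j a^* b^* c^* e^*)`_j'.

Definition omega : algC := (-1 + sqrtC (-3)) / 2.
Definition zeta : algC := (1 + sqrtC (-3)) / 2.   (* = e^{pi i/3} *)

Definition Smx : 'M[algC]_2 := mx2 0 (-1) 1 0.
Definition Tmx : 'M[algC]_2 := mx2 1 1 0 1.
Definition Tomega : 'M[algC]_2 := mx2 1 omega 0 1.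
Definition Lmx : 'M[algC]_2 := mx2 (omega ^+ 2) 0 0 omega.
Definition Umx : 'M[algC]_2 := Tmx *m Smx.
Definition Emx : 'M[algC]_2 := Tomega *m Smx *m Lmx.
Definition eps3 : 'M[algC]_2 := mx2 zeta 0 0 1.

Definition inW (k : nat) (P : V k) : Prop :=
  [/\ P + act Smx P = 0,
      P - act Lmx P = 0,
      P + act Umx P + act (Umx *m Umx) P = 0 &
      P + act Emx P + act (Emx *m Emx) P = 0].

Definition substZeta (k : nat) (P : V k) : V k :=
  \matrix_(i < k.+1, j < k.+1) (zeta ^+ i * (zeta^*) ^+ j * P i j).

Definition inWeig (k : nat) (j : nat) (P : V k) : Prop :=
  inW P /\ substZeta P = zeta ^+ j *: P.

(* The action [act] is a right action of 2x2 matrices: [act g] is [P |-> M_g^T P M_(conj g)],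
   where [M_g] is the matrix of the substitution (x, y) |-> (a x + b y, c x + e y) on binary forms
   of degree k, and [M_(g h) = M_g M_h].  Conjugating each of S, L, U, U^2, E, E^2 by eps3 gives a
   word in S, L, U followed by eps3, and on W these words are evaluated by the relations
   P|S = -P, P|L = P, P|U^2 = -P - P|U; so W|eps3 <= W, with equality as eps3 has order 6.
   On monomials z^a zbar^b, eps3 acts by zeta^(a-b) with zeta a primitive sixth root of unity,
   so the projection onto its zeta^j-eigenspace is the Fourier sum
   1/6 sum_m zeta^(-jm) (.|eps3^m), which preserves W. *)

From HB Require Import structures.
From mathcomp Require Import all_boot all_order all_algebra all_field.
From mathcomp Require Import ring zify.
Set Implicit Arguments. Unset Strict Implicit. Unset Printing Implicit Defensive.
Import Order.TTheory GRing.Theory Num.Theory.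
Local Open Scope ring_scope.

Local Notation lin a b := ('X * a%:P + b%:P)%R.

Section Homogenize.
Context {R : comRingType}.
Variables u v : {poly R}.

Definition homog n (p : {poly R}) : {poly R} :=
  \sum_(m < n.+1) p`_m *: (u ^+ m * v ^+ (n - m)).

Lemma homogD n p q : homog n (p + q) = homog n p + homog n q.
Proof. by rewrite -big_split; apply: eq_bigr => m _; rewrite coefD scalerDl. Qed.

Lemma homogZ n c p : homog n (c *: p) = c *: homog n p.
Proof. by rewrite scaler_sumr; apply: eq_bigr => m _; rewrite coefZ scalerA. Qed.

Lemma homogXM n p : homog n.+1 ('X * p) = u * homog n p.
Proof.
rewrite /homog big_ord_recl coefXM scale0r add0r mulr_sumr.
by apply: eq_bigr => m _; rewrite coefXM /= subSS exprS -scalerAr mulrA.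
Qed.

Lemma homogS n (p : {poly R}) : (size p <= n.+1)%N -> homog n.+1 p = v * homog n p.
Proof.
move=> sp; rewrite /homog big_ord_recr /= (nth_default 0 sp) scale0r addr0.
rewrite mulr_sumr; apply: eq_bigr => m _.
have lemn : (m <= n)%N := ltn_ord m.
by rewrite subSn // exprS -scalerAr mulrCA.
Qed.

Lemma homog_linM n a b (p : {poly R}) : (size p <= n.+1)%N ->
  homog n.+1 (lin a b * p) = (u * a%:P + v * b%:P) * homog n p.
Proof.
move=> sp; have -> : lin a b * p = a *: ('X * p) + b *: p.
  by rewrite -!mul_polyC; ring.
by rewrite homogD !homogZ homogXM homogS // -!mul_polyC; ring.
Qed.

Lemma size_lin_leq (a b : R) : (size (lin a b) <= 2)%N.
Proof.
rewrite mulrC mul_polyC; apply: leq_trans (size_polyD _ _) _.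
by rewrite geq_max (leq_trans (size_scale_leq _ _)) ?size_polyX ?(leq_trans (size_polyC_leq1 _)).
Qed.

Lemma size_linM_leq (a b : R) (p : {poly R}) n :
  (size p <= n.+1)%N -> (size (lin a b * p)%R <= n.+2)%N.
Proof. by move=> sp; have := size_polyMleq (lin a b) p; have := size_lin_leq a b; lia. Qed.

Lemma size_linexp_leq (a b : R) i : (size (lin a b ^+ i) <= i.+1)%N.
Proof. by elim: i => [|i IHi]; rewrite ?size_poly1 // exprS size_linM_leq. Qed.

Lemma size_linprod_leq (a b c e : R) i j :
  (size (lin a b ^+ i * lin c e ^+ j)%R <= (i + j).+1)%N.
Proof.
have := size_polyMleq (lin a b ^+ i) (lin c e ^+ j).
by have := size_linexp_leq a b i; have := size_linexp_leq c e j; lia.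
Qed.

Lemma homog_linprod (a b c e : R) i j :
  homog (i + j) (lin a b ^+ i * lin c e ^+ j) =
  (u * a%:P + v * b%:P) ^+ i * (u * c%:P + v * e%:P) ^+ j.
Proof.
elim: i => [|i IHi].
  rewrite !mul1r add0n; elim: j => [|j IHj].
    by rewrite /homog big_ord1 coefC /= scale1r !expr0 mulr1.
  by rewrite !exprS homog_linM ?IHj // size_linexp_leq.
by rewrite addSn !exprS -!mulrA homog_linM ?size_linprod_leq // IHi.
Qed.

End Homogenize.

Lemma mulmx2E (g h : 'M[algC]_2) i j : (g *m h) i j = g i 0 * h 0 j + g i 1 * h 1 j.
Proof.
rewrite mxE !big_ord_recl big_ord0 addr0.
by congr (g i _ * h _ j + g i _ * h _ j); apply: val_inj.
Qed.

Definition mob_mx k (g : 'M[algC]_2) : 'M[algC]_k.+1 :=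
  \matrix_(i, i') (mobpart k i (g 0 0) (g 0 1) (g 1 0) (g 1 1))`_i'.

Lemma act_mx k g (P : V k) :
  act g P = (mob_mx k g)^T *m P *m mob_mx k (map_mx Num.conj g).
Proof.
apply/matrixP => i' j'; rewrite !mxE.
under [RHS]eq_bigr => j _ do rewrite !mxE mulr_suml.
rewrite exchange_big; apply: eq_bigr => i _; apply: eq_bigr => j _.
by rewrite !mxE [P _ _ * _]mulrC.
Qed.

Lemma mobpart_mul k (i : 'I_k.+1) (g h : 'M[algC]_2) :
  mobpart k i ((g *m h) 0 0) ((g *m h) 0 1) ((g *m h) 1 0) ((g *m h) 1 1) =
  homog (lin (h 0 0) (h 0 1)) (lin (h 1 0) (h 1 1)) k
    (mobpart k i (g 0 0) (g 0 1) (g 1 0) (g 1 1)).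
Proof.
have le_ik : (i <= k)%N := ltn_ord i.
rewrite /mobpart -[X in homog _ _ X](subnKC le_ik) homog_linprod.
by rewrite !mulmx2E; congr (_ ^+ _ * _ ^+ _); rewrite !polyCD !polyCM; ring.
Qed.

Lemma mob_mx_mul k g h : mob_mx k (g *m h) = mob_mx k g *m mob_mx k h.
Proof.
apply/matrixP => i i'; rewrite mxE mobpart_mul coef_sum mxE.
by apply: eq_bigr => m _; rewrite coefZ !mxE.
Qed.

Lemma act_mul k g h (P : V k) : act (g *m h) P = act h (act g P).
Proof. by rewrite !act_mx map_mxM !mob_mx_mul trmx_mul !mulmxA. Qed.

Section ActLinear.
Variables (k : nat) (g : 'M[algC]_2).

Lemma act0 : act g (0 : V k) = 0.
Proof. by rewrite act_mx mulmx0 mul0mx. Qed.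

Lemma actD (P Q : V k) : act g (P + Q) = act g P + act g Q.
Proof. by rewrite !act_mx mulmxDr mulmxDl. Qed.

Lemma actZ c (P : V k) : act g (c *: P) = c *: act g P.
Proof. by rewrite !act_mx -scalemxAr -scalemxAl. Qed.

Lemma actN (P : V k) : act g (- P) = - act g P.
Proof. by rewrite -scaleN1r actZ scaleN1r. Qed.

End ActLinear.

Lemma map_mx2_conj (a b c d : algC) :
  map_mx Num.conj (mx2 a b c d) = mx2 a^* b^* c^* d^*.
Proof.
apply/matrixP => i j; rewrite !mxE.
by case: i => [[|[|i]] Hi]; case: j => [[|[|j]] Hj].
Qed.

Lemma mob_mx_diag k (a : algC) : mob_mx k (mx2 a 0 0 1) = diag_mx (\row_i a ^+ i).
Proof.
apply/matrixP => i i'; rewrite !mxE /mobpart /=.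
rewrite !polyC0 mulr0 addr0 add0r polyC1 expr1n mulr1 exprMn -rmorphXn coefMC coefXn.
by rewrite mulr_natl mulrb eq_sym mulrb.
Qed.

Lemma act_eps3 k (P : V k) : act eps3 P = substZeta P.
Proof.
rewrite act_mx map_mx2_conj rmorph0 rmorph1 !mob_mx_diag.
rewrite tr_diag_mx mul_diag_mx mul_mx_diag.
by apply/matrixP => i j; rewrite !mxE mulrAC.
Qed.

Lemma sum_prim_root_exp (R : idomainType) n (z : R) t : n.-primitive_root z ->
  \sum_(m < n) z ^+ (m * t) = if (n %| t)%N then n%:R else 0.
Proof.
move=> prim_z; under eq_bigr => m _ do rewrite mulnC exprM.
rewrite (prim_order_dvd prim_z); have [->|zt_neq1] := eqVneq.
  by rewrite (eq_bigr (fun=> 1)) => [|m _]; rewrite ?expr1n // sumr_const card_ord.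
apply/eqP; have : (z ^+ t - 1) * \sum_(m < n) (z ^+ t) ^+ m == 0.
  by rewrite -subrX1 -exprM mulnC exprM (prim_expr_order prim_z) expr1n subrr.
by rewrite mulf_eq0 subr_eq0 (negbTE zt_neq1).
Qed.

Lemma conjC_prim_root (C : numClosedFieldType) n (z : C) :
  n.-primitive_root z -> z^* = z ^+ n.-1.
Proof.
move=> prim_z; have n_gt0 := prim_order_gt0 prim_z.
have zn1 := prim_expr_order prim_z.
have normz1 : `|z| = 1.
  by apply/eqP; rewrite -(pexpr_eq1 n_gt0) // -normrX zn1 normr1.
have z_neq0 : z != 0 by rewrite -normr_eq0 normz1 oner_neq0.
apply: (mulfI z_neq0); rewrite -exprS prednK // zn1.
by rewrite -normCK normz1 expr1n.
Qed.

Lemma zeta_sqr : zeta ^+ 2 = zeta - 1.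
Proof. by have s3 := sqrtCK (-3 : algC); rewrite /zeta; field: s3. Qed.

Lemma omegaE : omega = zeta - 1.
Proof. by rewrite /omega /zeta; field. Qed.

Lemma zeta_prim : 6.-primitive_root zeta.
Proof.
have zeta3 : zeta ^+ 3 = -1 by ring: zeta_sqr.
have zeta6 : zeta ^+ 6 = 1 by rewrite (exprM zeta 3 2) zeta3 sqrrN expr1n.
have zeta3_neq1 : zeta ^+ 3 != 1 by rewrite zeta3 eq_sym -addr_eq0 -mulr2n pnatr_eq0.
have zeta2_neq1 : zeta ^+ 2 != 1.
  apply: contra_neq (_ : (2 : algC) ^+ 2 != 1) => [zeta2|]; last by rewrite -natrX pnatr_eq1.
  have zeta_eq2 : zeta = 2 by rewrite -[LHS](subrK 1) -zeta_sqr zeta2.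
  by rewrite -zeta_eq2 zeta2.
have [m prim_m m_dvd6] := prim_order_exists (isT : (0 < 6)%N) zeta6.
have := prim_expr_order prim_m; move: prim_m m_dvd6.
case: m => [|[|[|[|[|[|[|m]]]]]]] //= prim_m _ zetam1 //.
- by move: zeta3_neq1; rewrite -[zeta]expr1 zetam1 expr1n eqxx.
- by rewrite zetam1 eqxx in zeta2_neq1.
- by rewrite zetam1 eqxx in zeta3_neq1.
Qed.

Lemma conj_zeta : zeta^* = zeta ^+ 5.
Proof. exact: conjC_prim_root zeta_prim. Qed.

Lemma mx2_mul (a b c d a' b' c' d' : algC) :
  mx2 a b c d *m mx2 a' b' c' d' =
  mx2 (a * a' + b * c') (a * b' + b * d') (c * a' + d * c') (c * b' + d * d').
Proof.
apply/matrixP => i j; rewrite mulmx2E !mxE.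
by case: i => [[|[|i]] Hi]; case: j => [[|[|j]] Hj].
Qed.

(* The entries lie in Z[zeta]; [ring: zeta_sqr] normalises modulo zeta^2 = zeta - 1. *)
Ltac mx2_ring :=
  rewrite /Umx /Emx /Tomega /Tmx /Smx /Lmx /eps3 omegaE !mx2_mul;
  congr mx2; ring: zeta_sqr.

Section Eps3Conjugation.
Variables (k : nat) (P : V k).

Lemma act_S_eps3 :
  act Smx (act eps3 P) = act eps3 (act Lmx (act Lmx (act Smx (act Smx (act Smx P))))).
Proof. by rewrite -!act_mul; congr act; mx2_ring. Qed.

Lemma act_L_eps3 : act Lmx (act eps3 P) = act eps3 (act Lmx P).
Proof. by rewrite -!act_mul; congr act; mx2_ring. Qed.

Lemma act_U_eps3 : act Umx (act eps3 P) =
  act eps3 (act Lmx (act Smx (act Umx (act Umx (act Smx (act Lmx (act Lmx P))))))).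
Proof. by rewrite -!act_mul; congr act; mx2_ring. Qed.

Lemma act_U2_eps3 : act (Umx *m Umx) (act eps3 P) =
  act eps3 (act Lmx (act Smx (act Umx (act Smx (act Lmx (act Lmx P)))))).
Proof. by rewrite -!act_mul; congr act; mx2_ring. Qed.

Lemma act_E_eps3 : act Emx (act eps3 P) = act eps3 (act Smx (act Umx (act Umx (act Smx P)))).
Proof. by rewrite -!act_mul; congr act; mx2_ring. Qed.

Lemma act_E2_eps3 : act (Emx *m Emx) (act eps3 P) = act eps3 (act Smx (act Umx (act Smx P))).
Proof. by rewrite -!act_mul; congr act; mx2_ring. Qed.

End Eps3Conjugation.

Lemma inW_relations k (P : V k) : inW P ->
  [/\ act Smx P = - P, act Lmx P = P & act Umx (act Umx P) = - P - act Umx P].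
Proof.
case=> /eqP hS /eqP hL /eqP hU _; split; apply/eqP.
- by rewrite -addr_eq0 addrC.
- by rewrite eq_sym -subr_eq0.
- by rewrite -act_mul -opprD -addr_eq0 addrC.
Qed.

Lemma inW_eps3 k (P : V k) : inW P -> inW (act eps3 P).
Proof.
move=> WP; have [aS aL aUU] := inW_relations WP.
split; [ rewrite act_S_eps3 -actD | rewrite act_L_eps3 -actN -actD
       | rewrite act_U_eps3 act_U2_eps3 -!actD | rewrite act_E_eps3 act_E2_eps3 -!actD ];
  rewrite [X in act eps3 X](_ : _ = 0) ?act0 //.
all: by rewrite !(actN, actD, aS, aL, aUU, opprK, opprD) ?addNKr subrr.
Qed.

Section WSubspace.
Variable k : nat.
Implicit Types P Q : V k.

Lemma inW0 : inW (0 : V k).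
Proof. by split; rewrite !act0 ?addr0 ?subr0. Qed.

Lemma inWD P Q : inW P -> inW Q -> inW (P + Q).
Proof.
case=> hS hL hU hE [gS gL gU gE]; split; rewrite !actD.
- by rewrite addrACA hS gS addr0.
- by rewrite opprD addrACA hL gL addr0.
- by rewrite (addrACA P) (addrACA (P + _)) hU gU addr0.
- by rewrite (addrACA P) (addrACA (P + _)) hE gE addr0.
Qed.

Lemma inWZ c P : inW P -> inW (c *: P).
Proof.
by case=> hS hL hU hE; split; rewrite !actZ -?scalerDr -?scalerBr ?hS ?hL ?hU ?hE scaler0.
Qed.

Lemma inW_sum (I : finType) (F : I -> V k) : (forall i, inW (F i)) -> inW (\sum_i F i).
Proof. by move=> WF; apply: big_ind => //; [exact: inW0 | exact: inWD]. Qed.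

Lemma inW_iter_substZeta m P : inW P -> inW (iter m (@substZeta k) P).
Proof. by move=> WP; elim: m => //= m WPm; rewrite -act_eps3; apply: inW_eps3. Qed.

End WSubspace.

(* [zeta ^+ a * zeta^* ^+ b = zeta ^+ (a - b)] is written [zeta ^+ (eig_index a b).+1], matching
   the exponents [j.+1] of the statement. *)
Definition eig_index (a b : nat) : 'I_6 :=
  Ordinal (ltn_pmod (a + 5 * b + 5) (isT : (0 < 6)%N)).

Lemma zeta_monomial a b : zeta ^+ a * zeta^* ^+ b = zeta ^+ (eig_index a b).+1.
Proof.
rewrite conj_zeta -exprM -exprD -(prim_expr_mod zeta_prim).
by rewrite -[RHS](prim_expr_mod zeta_prim); congr (_ ^+ _) => /=; lia.
Qed.

Lemma eq_zeta_exp (i j : 'I_6) : (zeta ^+ i.+1 == zeta ^+ j.+1) = (i == j).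
Proof.
rewrite (eq_prim_root_expr zeta_prim); apply/eqP/eqP => [|-> //].
by have := ltn_ord i; have := ltn_ord j => *; apply: ord_inj; lia.
Qed.

Section Eigenspaces.
Variable k : nat.
Implicit Types (P F : V k) (a b : 'I_k.+1).

Lemma substZetaE P a b : substZeta P a b = zeta ^+ (eig_index a b).+1 * P a b.
Proof. by rewrite mxE zeta_monomial. Qed.

Lemma iter_substZetaE m P a b :
  iter m (@substZeta k) P a b = zeta ^+ (m * (eig_index a b).+1) * P a b.
Proof.
elim: m => [|m IHm]; first by rewrite mul1r.
by rewrite iterS substZetaE IHm mulrA -exprD mulSn.
Qed.

Lemma iter_substZeta_order P : iter 6 (@substZeta k) P = P.
Proof.
apply/matrixP => a b.
by rewrite iter_substZetaE exprM (prim_expr_order zeta_prim) expr1n mul1r.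
Qed.

Lemma eigvec_coef_eq0 (j : 'I_6) F a b :
  substZeta F = zeta ^+ j.+1 *: F -> eig_index a b != j -> F a b = 0.
Proof.
move=> /matrixP/(_ a b); rewrite substZetaE mxE => /eqP.
by rewrite -subr_eq0 -mulrBl mulf_eq0 subr_eq0 eq_zeta_exp => /orP[->|/eqP].
Qed.

Definition eig_comp (j : 'I_6) P : V k :=
  \matrix_(a, b) (if eig_index a b == j then P a b else 0).

Lemma substZeta_eig_comp (j : 'I_6) P : substZeta (eig_comp j P) = zeta ^+ j.+1 *: eig_comp j P.
Proof. by apply/matrixP => a b; rewrite substZetaE !mxE; case: eqP => [->|]; rewrite ?mulr0. Qed.

Lemma sum_eig_comp P : \sum_(j < 6) eig_comp j P = P.
Proof.
apply/matrixP => a b; rewrite summxE (bigD1 (eig_index a b)) //= mxE eqxx big1 ?addr0 //.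
by move=> j nej; rewrite mxE eq_sym (negbTE nej).
Qed.

Lemma eig_comp_sum_eigvec (f : 'I_6 -> V k) i :
  (forall j, substZeta (f j) = zeta ^+ j.+1 *: f j) -> eig_comp i (\sum_(j < 6) f j) = f i.
Proof.
move=> eig_f; apply/matrixP => a b; rewrite mxE summxE (bigD1 (eig_index a b)) //=.
rewrite big1 ?addr0 => [|j nej]; last by rewrite (eigvec_coef_eq0 (eig_f j)) // eq_sym.
by case: eqP => [-> // | /eqP nei]; rewrite (eigvec_coef_eq0 (eig_f i)).
Qed.

(* The discrete Fourier inversion: [zeta ^+ (5 * j.+1) = zeta ^- j.+1]. *)
Lemma eig_comp_fourier (j : 'I_6) P : eig_comp j P =
  6^-1 *: \sum_(m < 6) zeta ^+ (m * (5 * j.+1)) *: iter m (@substZeta k) P.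
Proof.
apply/matrixP => a b; rewrite !mxE summxE.
under eq_bigr => m _ do rewrite !mxE iter_substZetaE mulrA -exprD -mulnDr.
rewrite -mulr_suml (sum_prim_root_exp _ zeta_prim).
have -> : (6 %| 5 * j.+1 + (eig_index a b).+1)%N = (eig_index a b == j).
  move: (eig_index a b) => d; apply/idP/eqP => [dvd6 | ->]; last lia.
  by have := ltn_ord d; have := ltn_ord j => *; apply: ord_inj; lia.
by case: eqP; rewrite ?mul0r ?mulr0 // mulrA mulVf ?mul1r // pnatr_eq0.
Qed.

Lemma inW_eig_comp (j : 'I_6) P : inW P -> inW (eig_comp j P).
Proof.
move=> WP; rewrite eig_comp_fourier; apply/inWZ/inW_sum => m.
exact/inWZ/inW_iter_substZeta.
Qed.

End Eigenspaces.

Theorem proposition5p6 (k : nat) (hk : odd k) :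
  (* W_{k,k} | eps3 = W_{k,k} *)
  (forall Q : V k, inW Q <-> exists P : V k, inW P /\ Q = act eps3 P) /\
  (* W_{k,k} = sum_{j=1}^6 W^{zeta^j} *)
  (forall P : V k, inW P <->
     exists f : 'I_6 -> V k,
       (forall j : 'I_6, inWeig j.+1 (f j)) /\ P = \sum_(j < 6) f j) /\
  (* the sum is direct *)
  (forall f g : 'I_6 -> V k,
     (forall j : 'I_6, inWeig j.+1 (f j)) ->
     (forall j : 'I_6, inWeig j.+1 (g j)) ->
     \sum_(j < 6) f j = \sum_(j < 6) g j -> forall j, f j = g j).
Proof.
split; [|split].
- move=> Q; split=> [WQ | [P [WP ->]]]; last exact: inW_eps3.
  exists (iter 5 (@substZeta k) Q); split; first exact: inW_iter_substZeta.
  by rewrite act_eps3 -iterS iter_substZeta_order.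
- move=> P; split=> [WP | [f [Wf ->]]]; last by apply: inW_sum => j; case: (Wf j).
  exists (fun j => eig_comp j P); split; last by rewrite sum_eig_comp.
  by move=> j; split; [exact: inW_eig_comp | exact: substZeta_eig_comp].
- move=> f g Wf Wg eq_fg j.
  have eig_f j' := proj2 (Wf j'); have eig_g j' := proj2 (Wg j').
  by rewrite -(eig_comp_sum_eigvec j eig_f) eq_fg (eig_comp_sum_eigvec j eig_g).
Qed.
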